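(* Let $\mathcal F,\mathcal F'$ be $\rho$-flags on $V,V'$ with fixed adapted bases $(v_i),(v'_i)$. Define $F:U(M(\rho,k))\times{\rm Aut}_0(\mathcal C)\times\mathcal T\to{\rm Iso}_{alg}({\rm End}(\mathcal F),{\rm End}(\mathcal F'))$ by $F(A,g,(a_{ij}))=\varphi$, where $\varphi$ is the linear map with $\varphi(E_{ij})=F_{ij}$ for all $i\rho j$, with $F_{ij}$ constructed as follows: $(w_1,\dots,w_n)=(v'_1,\dots,v'_n)A^g$, $F_{ij}(w_j)=a_{ij}w_i$ and $F_{ij}(w_r)=0$ for $r\neq j$. Then $F$ is well defined (each such $\varphi$ is an algebra isomorphism ${\rm End}(\mathcal F)\to{\rm End}(\mathcal F')$) and $F$ is surjective: every algebra isomorphism ${\rm End}(\mathcal F)\to{\rm End}(\mathcal F')$ is of the form $F(A,g,(a_{ij})_{i\rho j})$.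
   Context: Let $k$ be a field, $n\ge 1$, $\rho$ a preorder on $\{1,\dots,n\}$, $M(\rho,k)$ the subalgebra of $M_n(k)$ of matrices with $(i,j)$-entry $0$ whenever $(i,j)\notin\rho$, and $U(M(\rho,k))$ its group of invertible elements. Write $i\sim j$ iff $i\rho j$ and $j\rho i$; $\mathcal C$ is the set of classes, $\hat i$ the class of $i$, ordered by $\hat i\le\hat j$ iff $i\rho j$; $m_\alpha=|\alpha|$. A $\rho$-flag $(V,(V_\alpha)_{\alpha\in\mathcal C})$ is an $n$-dimensional space with subspaces $V_\alpha$ admitting a basis $B=\bigcup_\alpha B_\alpha$ (disjoint) with $|B_\alpha|=m_\alpha$ and $\bigcup_{\beta\le\alpha}B_\beta$ a basis of $V_\alpha$; ${\rm End}(\mathcal F)$ is the algebra of linear $f:V\to V$ with $f(V_\alpha)\subseteq V_\alpha$. An adapted basis $(v_i)_{1\le i\le n}$ of $V$ is one with $\{v_i:\hat i\le\alpha\}$ a basis of $V_\alpha$ for all $\alpha$; for $i\rho j$, $E_{ij}(v_t)=\delta_{jt}v_i$. ${\rm Aut}_0(\mathcal C)$ is the group of poset automorphisms $g$ of $\mathcal C$ with $m_{g(\alpha)}=m_\alpha$ for all $\alpha$. For $g\in{\rm Aut}_0(\mathcal C)$, $\tilde g\in S_n$ is defined by: if $\alpha=\{i_1<\dots<i_r\}$ and $g(\alpha)=\{j_1<\dots<j_r\}$ then $\tilde g(i_s)=j_s$. For $A\in M_n(k)$, $A^g$ is the matrix whose $(i,j)$-entry is the $(i,\tilde g(j))$-entry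 of $A$. $\mathcal T$ is the set of families $(a_{ij})_{i\rho j}$ in $k^*$ with $a_{ij}a_{jr}=a_{ir}$ whenever $i\rho j$, $j\rho r$. $(w_1,\dots,w_n)=(v'_1,\dots,v'_n)M$ means $w_j=\sum_i M_{ij}v'_i$. *)

From HB Require Import structures.
From mathcomp Require Import all_boot all_order all_algebra all_fingroup.
Set Implicit Arguments. Unset Strict Implicit. Unset Printing Implicit Defensive.
Import GRing.Theory.
Local Open Scope ring_scope.

Section Defs.
Variable n : nat.
Implicit Types (rho : rel 'I_n).

Definition preorder_rel rho := reflexive rho /\ transitive rho.

Definition cls rho (i : 'I_n) : {set 'I_n} := [set j | rho i j && rho j i].

Definition classes rho : {set {set 'I_n}} := [set cls rho i | i : 'I_n].

Definition cle rho (a b : {set 'I_n}) : bool :=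
  [exists i in a, exists j in b, rho i j].

(* Aut_0(C): poset automorphisms of C preserving the class sizes.
   (g is a function on sets of indices; only its restriction to C matters.) *)
Definition Aut0 rho (g : {set 'I_n} -> {set 'I_n}) : Prop :=
  [/\ {in classes rho, forall a, g a \in classes rho},
      {in classes rho &, injective g},
      {in classes rho &, forall a b, cle rho (g a) (g b) = cle rho a b}
    & {in classes rho, forall a, #|g a| = #|a|}].

(* tilde g : if alpha = {i_1 < ... < i_r}, g alpha = {j_1 < ... < j_r},
   then tilde g (i_s) = j_s (enum of a set of ordinals is increasing). *)
Definition gtilde rho (g : {set 'I_n} -> {set 'I_n}) (i : 'I_n) : 'I_n :=
  nth i (enum (g (cls rho i))) (index i (enum (cls rho i))).

Definition mx_twist (k : fieldType) rho g (A : 'M[k]_n) : 'M[k]_n :=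
  \matrix_(i, j) A i (gtilde rho g j).

Definition inMrho (k : fieldType) rho (A : 'M[k]_n) : bool :=
  [forall i, forall j, ~~ rho i j ==> (A i j == 0)].

Definition unitMrho (k : fieldType) rho (A : 'M[k]_n) : Prop :=
  [/\ inMrho rho A, A \in unitmx & inMrho rho (invmx A)].

Definition Tfam (k : fieldType) rho (a : 'I_n -> 'I_n -> k) : Prop :=
  (forall i j, rho i j -> a i j != 0) /\
  (forall i j r, rho i j -> rho j r -> a i j * a j r = a i r).

Section Flags.
Variables (k : fieldType) (V : vectType k).

(* (V, (V_alpha)_alpha) is a rho-flag and v is an adapted basis of it:
   v is a basis of V and, for each class alpha, {v_t : hat t <= alpha}
   is a basis of V_alpha.  Vs is indexed by classes alpha in C. *)
Definition adapted_basis rho (Vs : {set 'I_n} -> {vspace V})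
    (v : n.-tuple V) : Prop :=
  basis_of fullv v /\
  {in classes rho, forall a,
     basis_of (Vs a) [seq tnth v t | t <- enum 'I_n & cle rho (cls rho t) a]}.

Definition EndF rho (Vs : {set 'I_n} -> {vspace V}) : pred 'End(V) :=
  fun f => [forall a in classes rho, (f @: Vs a <= Vs a)%VS].

Definition Eij (v : n.-tuple V) (i j : 'I_n) : 'End(V) :=
  linfun (fun x => coord v j x *: tnth v i).

Definition mxbasis (v : n.-tuple V) (M : 'M[k]_n) : n.-tuple V :=
  [tuple \sum_(i < n) M i j *: tnth v i | j < n].

End Flags.

Definition alg_iso (k : fieldType) (V V' : vectType k)
    (EF : pred 'End(V)) (EF' : pred 'End(V')) (phi : 'End(V) -> 'End(V')) :=
  [/\ {in EF, forall f, phi f \in EF'},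
      (forall c : k, {in EF &, forall f g, phi (c *: f + g) = c *: phi f + phi g}),
      {in EF &, forall f g, phi (f \o g)%VF = (phi f \o phi g)%VF},
      phi \1%VF = \1%VF
    & {in EF &, injective phi} /\
      (forall fp, fp \in EF' -> exists2 f, f \in EF & phi f = fp)].

Definition Fij (k : fieldType) (V' : vectType k) rho (v' : n.-tuple V')
    (A : 'M[k]_n) g (a : 'I_n -> 'I_n -> k) (i j : 'I_n) : 'End(V') :=
  let w := mxbasis v' (mx_twist rho g A) in
  linfun (fun x => (a i j * coord w j x) *: tnth w i).

(* F(A,g,a) : the linear map with phi(E_ij) = F_ij for i rho j.
   Every f in End(F) is sum_{i rho j} c_ij E_ij with c_ij = coord_i (f v_j). *)
Definition Fmap (k : fieldType) (V V' : vectType k) rho (v : n.-tuple V)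
    (v' : n.-tuple V') (A : 'M[k]_n) g (a : 'I_n -> 'I_n -> k)
    (f : 'End(V)) : 'End(V') :=
  \sum_(i < n) \sum_(j < n | rho i j) coord v i (f (tnth v j)) *: Fij rho v' A g a i j.

End Defs.

From Pilot Require Import Defs.
From HB Require Import structures.
From mathcomp Require Import all_boot all_order all_algebra all_fingroup.
Import GRing.Theory.
Local Open Scope ring_scope.
Set Implicit Arguments. Unset Strict Implicit.

(* For the direct part, write everything in the bases [v] of [V] and [w = v' A^g] of [V']:
   because [A] and [A^-1] lie in [M(rho, k)] and [g] is a size-preserving automorphism of
   the poset of classes, [w] is again adapted to the flag of [V'] (with the classes moved
   by [g]), so both [End(F)] and [End(F')] are the matrices supported on [rho], and
   [F(A, g, a)] multiplies the [(p, m)] entry by [a_pm]; the identity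
   [a_ij a_jr = a_ir] makes this multiplicative.
   Conversely, an isomorphism [phi] maps the [E_ii] to [n] nonzero orthogonal idempotents,
   and vectors [u_j] in their images form a basis in which [phi (E_pm) = b_pm E^u_pm] with
   [b] in [T].  As the [E^u_pm] and the [E^v'_st] ([p rho m], [s rho t]) all lie in
   [End(F')], the change of basis between [u] and [v'] is compatible with [rho]; pairing
   each [j] with an index [t] where both transition coefficients are nonzero yields an
   order automorphism [g] of the classes, and a counting argument shows that [g] preserves
   class sizes.  Reindexing the transition matrix by [g~^-1] gives [A] with [w = u]. *)

(* fingroup also defines [classes]. *)
Local Notation classes := Defs.classes.

Lemma linfunE_linear (k : fieldType) (V W : vectType k) (F : V -> W) :
  linear F -> linfun F =1 F.
Proof.
move=> HF x; pose FF : {linear V -> W} := HB.pack F (GRing.isLinear.Build _ _ _ _ F HF).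
exact: (lfunE FF x).
Qed.

Section BasisCoord.
Variables (k : fieldType) (n : nat) (V : vectType k) (e : n.-tuple V).
Hypothesis He : basis_of fullv e.

Lemma coord_tnth i j : coord e i (tnth e j) = (j == i)%:R.
Proof. by rewrite (tnth_nth 0) coord_free // (basis_free He). Qed.

Lemma basis_expansion x : x = \sum_i coord e i x *: tnth e i.
Proof.
rewrite {1}(coord_basis He (memvf x)); apply: eq_bigr => i _.
by rewrite (tnth_nth 0).
Qed.

Lemma sum_delta_tnth t : \sum_i ((i == t)%:R : k) *: tnth e i = tnth e t.
Proof.
rewrite (bigD1 t) //= eqxx scale1r big1 ?addr0 // => i /negPf ->.
by rewrite scale0r.
Qed.

Lemma lfun_basis_eq (W : vectType k) (f h : 'Hom(V, W)) :
  (forall j, f (tnth e j) = h (tnth e j)) -> f = h.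
Proof.
move=> H; apply/lfunP => x; rewrite (basis_expansion x) !linear_sum.
by apply: eq_bigr => j _; rewrite !linearZ /= H.
Qed.

Lemma lfun_coord_eq (f h : 'End(V)) :
  (forall i j, coord e i (f (tnth e j)) = coord e i (h (tnth e j))) -> f = h.
Proof.
move=> H; apply: lfun_basis_eq => j.
by rewrite (basis_expansion (f _)) (basis_expansion (h _)); apply: eq_bigr => i _; rewrite H.
Qed.

Lemma coord_comp (f h : 'End(V)) i m :
  coord e i ((f \o h)%VF (tnth e m)) =
  \sum_l coord e i (f (tnth e l)) * coord e l (h (tnth e m)).
Proof.
rewrite comp_lfunE {1}(basis_expansion (h (tnth e m))) !linear_sum /=.
by apply: eq_bigr => l _; rewrite !linearZ /= mulrC.
Qed.

Lemma EijE p q x : Eij e p q x = coord e q x *: tnth e p.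
Proof.
rewrite /Eij linfunE_linear // => c y z.
by rewrite linearP /= scalerDl scalerA.
Qed.

Lemma coord_Eij i p q m :
  coord e i (Eij e p q (tnth e m)) = ((i == p) && (m == q))%:R.
Proof.
rewrite EijE linearZ /= !coord_tnth eq_sym [p == i]eq_sym.
by case: (i == p); case: (m == q); rewrite ?mulr0 ?mulr1 ?mul0r.
Qed.

Lemma coord_sum_Eij (d : 'I_n -> 'I_n -> k) p m :
  coord e p ((\sum_i \sum_j d i j *: Eij e i j) (tnth e m)) = d p m.
Proof.
rewrite sum_lfunE linear_sum.
under eq_bigr => i _ do rewrite sum_lfunE linear_sum.
under eq_bigr => i _ do under eq_bigr => j _ do
  rewrite scale_lfunE linearZ /= coord_Eij.
rewrite (bigD1 p) //= [X in _ + X]big1 ?addr0; last first.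
  by move=> i /negPf Hip; rewrite big1 // => j _; rewrite eq_sym Hip mulr0.
rewrite (bigD1 m) //= [X in _ + X]big1 ?addr0; last first.
  by move=> j /negPf Hjm; rewrite eq_sym Hjm andbF mulr0.
by rewrite !eqxx mulr1.
Qed.

Lemma Eij_comp i j l m :
  (Eij e i j \o Eij e l m)%VF = ((j == l)%:R : k) *: Eij e i m.
Proof.
apply: lfun_basis_eq => t.
by rewrite comp_lfunE scale_lfunE !EijE linearZ /= scalerA !coord_tnth [l == j]eq_sym mulrC.
Qed.

Lemma Eij_sandwich (f : 'End(V)) p m :
  (Eij e p p \o f \o Eij e m m)%VF = coord e p (f (tnth e m)) *: Eij e p m.
Proof.
apply: lfun_basis_eq => t.
by rewrite !comp_lfunE scale_lfunE !EijE !linearZ /= !linearZ /= scalerA mulrC.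
Qed.

Lemma Eij_neq0 i j : Eij e i j != 0.
Proof.
apply/eqP => /(congr1 (fun F : 'End(V) => coord e i (F (tnth e j)))).
by rewrite coord_Eij !eqxx zero_lfunE linear0 => /eqP; rewrite /= mulr1n oner_eq0.
Qed.

End BasisCoord.

Section PreorderClasses.
Variables (n : nat) (rho : rel 'I_n).
Hypothesis Hrho : preorder_rel rho.

Lemma rho_refl i : rho i i. Proof. by case: Hrho. Qed.

Lemma rho_trans i j l : rho i j -> rho j l -> rho i l.
Proof. by case: Hrho => _ T H1 H2; apply: T H1 H2. Qed.

Lemma mem_cls i : i \in cls rho i.
Proof. by rewrite inE rho_refl. Qed.

Lemma cls_eqP i j : reflect (cls rho i = cls rho j) (rho i j && rho j i).
Proof.
apply: (iffP idP) => [/andP[Hij Hji] | H]; last first.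
  by have := mem_cls j; rewrite -H inE andbC.
apply/setP => l; rewrite !inE.
by apply/andP/andP => -[H1 H2]; split; apply: rho_trans; eassumption.
Qed.

Lemma mem_cls_eq i j : j \in cls rho i -> cls rho j = cls rho i.
Proof. by rewrite inE andbC => /cls_eqP. Qed.

Lemma cls_classes i : cls rho i \in classes rho.
Proof. exact: imset_f. Qed.

Lemma classesP a : a \in classes rho -> exists i, a = cls rho i.
Proof. by case/imsetP => i _ ->; exists i. Qed.

Lemma cle_cls i j : cle rho (cls rho i) (cls rho j) = rho i j.
Proof.
apply/idP/idP => [|H].
  case/existsP => i' /andP[Hi' /existsP[j' /andP[Hj' H']]].
  move: Hi' Hj'; rewrite !inE => /andP[Hii' _] /andP[_ Hj'j].
  exact: rho_trans (rho_trans Hii' H') Hj'j.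
apply/existsP; exists i; rewrite mem_cls /=.
by apply/existsP; exists j; rewrite mem_cls.
Qed.

Lemma cle_trans a b c : a \in classes rho -> b \in classes rho -> c \in classes rho ->
  cle rho a b -> cle rho b c -> cle rho a c.
Proof.
by move=> /classesP[i ->] /classesP[j ->] /classesP[l ->]; rewrite !cle_cls; apply: rho_trans.
Qed.

Lemma cle_anti a b : a \in classes rho -> b \in classes rho ->
  cle rho a b -> cle rho b a -> a = b.
Proof.
by move=> /classesP[i ->] /classesP[j ->]; rewrite !cle_cls => H1 H2; apply/cls_eqP; rewrite H1 H2.
Qed.

Definition down_card (c : {set 'I_n}) : nat := #|[set d in classes rho | cle rho d c]|.

Lemma down_card_le c d : c \in classes rho -> d \in classes rho ->
  cle rho c d -> (down_card c <= down_card d)%N.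
Proof.
move=> Hc Hd Hcd; apply/subset_leq_card/subsetP => x; rewrite !inE => /andP[Hx Hxc].
by rewrite Hx (cle_trans Hx Hc Hd).
Qed.

Lemma down_card_lt c d : c \in classes rho -> d \in classes rho ->
  cle rho c d -> c != d -> (down_card c < down_card d)%N.
Proof.
move=> Hc Hd Hcd Hne; apply: proper_card; rewrite properEneq; apply/andP; split.
  have Hdd : cle rho d d by have [i ->] := classesP Hd; rewrite cle_cls rho_refl.
  apply/eqP => /setP/(_ d); rewrite !inE Hd Hdd /= => Hdc.
  by move/eqP: Hne; apply; apply: cle_anti.
apply/subsetP => x; rewrite !inE => /andP[Hx Hxc].
by rewrite Hx (cle_trans Hx Hc Hd).
Qed.

Lemma down_card_morph (g : {set 'I_n} -> {set 'I_n}) c :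
  {in classes rho, forall a, g a \in classes rho} ->
  {in classes rho &, injective g} ->
  {in classes rho &, forall a b, cle rho (g a) (g b) = cle rho a b} ->
  c \in classes rho -> down_card (g c) = down_card c.
Proof.
move=> g_classes g_inj g_cle Hc.
have g_onto : g @: classes rho = classes rho.
  apply/eqP; rewrite eqEcard (card_in_imset g_inj) leqnn andbT.
  by apply/subsetP => x /imsetP[a Ha ->]; apply: g_classes.
rewrite /down_card.
have -> : [set d in classes rho | cle rho d (g c)] =
          g @: [set d in classes rho | cle rho d c].
  apply/setP => x; apply/idP/imsetP.
    rewrite inE => /andP[Hx Hxc]; move: Hx; rewrite -{1}g_onto => /imsetP[y Hy Exy].
    by exists y; rewrite // inE Hy -(g_cle y c Hy Hc) -Exy.
  by case=> y; rewrite !inE => /andP[Hy Hyc] ->; rewrite g_classes // g_cle.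
rewrite card_in_imset // => x y; rewrite !inE => /andP[Hx _] /andP[Hy _].
exact: g_inj.
Qed.

Definition inMrho_lfun (k : fieldType) (V : vectType k) (e : n.-tuple V) (f : 'End(V)) :=
  forall i j, ~~ rho i j -> coord e i (f (tnth e j)) = 0.

Section EndFCoord.
Variables (k : fieldType) (V : vectType k) (Vs : {set 'I_n} -> {vspace V}).
Variables (e : n.-tuple V) (h : 'I_n -> {set 'I_n}).
Hypothesis He : basis_of fullv e.
Hypothesis h_classes : forall t, h t \in classes rho.
Hypothesis h_cle : forall i j, cle rho (h i) (h j) = rho i j.
Hypothesis Vs_span : forall b, b \in classes rho ->
  Vs b = <<[seq tnth e t | t <- enum 'I_n & cle rho (h t) b]>>%VS.

Lemma coord_span0 (P : pred 'I_n) x i :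
  x \in <<[seq tnth e t | t <- enum 'I_n & P t]>>%VS -> ~~ P i -> coord e i x = 0.
Proof.
set X := [seq _ | _ <- _]; move=> Hx HP.
rewrite (coord_span (X := in_tuple X) Hx) linear_sum big1 // => l _; rewrite linearZ /=.
have /mapP[t] : X`_l \in X by apply: mem_nth.
rewrite mem_filter => /andP[Pt _] ->; rewrite coord_tnth //.
by case: eqP => [E|_]; [move: Pt HP; rewrite E => -> | rewrite mulr0].
Qed.

Lemma EndF_inMrho f : (f \in EndF rho Vs) <-> inMrho_lfun e f.
Proof.
split => [Hf i j Hij | Hf].
  have Hj : tnth e j \in Vs (h j).
    rewrite Vs_span ?h_classes //; apply: memv_span; apply: map_f.
    by rewrite mem_filter h_cle rho_refl mem_enum.
  move: Hf (memv_img f Hj); rewrite unfold_in => /forallP/(_ (h j)).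
  rewrite h_classes => /subvP S /S; rewrite Vs_span ?h_classes // => H.
  by apply: (coord_span0 H); rewrite h_cle.
rewrite unfold_in; apply/forallP => a; apply/implyP => Ha.
rewrite Vs_span ?h_classes // limg_span; apply/span_subvP => y /mapP[x /mapP[t Ht ->] ->].
move: Ht; rewrite mem_filter => /andP[Hta _].
rewrite (basis_expansion He (f (tnth e t))); apply: memv_suml => i _.
have [Hit|Hit] := boolP (rho i t); last by rewrite Hf // scale0r mem0v.
apply: memvZ; apply: memv_span; apply: map_f; rewrite mem_filter mem_enum andbT.
by apply: (cle_trans (h_classes i) (h_classes t) Ha) => //; rewrite h_cle.
Qed.

End EndFCoord.

Section AdaptedEnd.
Variables (k : fieldType) (V : vectType k) (Vs : {set 'I_n} -> {vspace V}).
Variable e : n.-tuple V.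
Hypothesis He : adapted_basis rho Vs e.

Lemma adapted_span b : b \in classes rho ->
  Vs b = <<[seq tnth e t | t <- enum 'I_n & cle rho (cls rho t) b]>>%VS.
Proof. by case: He => _ H /H /andP[/eqP -> _]. Qed.

Lemma adapted_EndF f : (f \in EndF rho Vs) <-> inMrho_lfun e f.
Proof. exact: (EndF_inMrho He.1 cls_classes cle_cls adapted_span). Qed.

Lemma Eij_EndF i j : rho i j -> Eij e i j \in EndF rho Vs.
Proof.
move=> Hij; apply/adapted_EndF => p m Hpm; rewrite (coord_Eij He.1).
have [Epi|] := eqVneq p i; last by rewrite mulr0n.
have [Emj|] := eqVneq m j; last by rewrite andbF.
by move: Hpm; rewrite Epi Emj Hij.
Qed.

Lemma EndF0 : (0 : 'End(V)) \in EndF rho Vs.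
Proof. by apply/adapted_EndF => p m _; rewrite zero_lfunE linear0. Qed.

Lemma EndFZ c f : f \in EndF rho Vs -> c *: f \in EndF rho Vs.
Proof.
move/adapted_EndF => H; apply/adapted_EndF => p m Hpm.
by rewrite scale_lfunE linearZ /= H // mulr0.
Qed.

Lemma EndF_comp f h : f \in EndF rho Vs -> h \in EndF rho Vs ->
  (f \o h)%VF \in EndF rho Vs.
Proof.
move=> /adapted_EndF Hf /adapted_EndF Hh; apply/adapted_EndF => p m Hpm.
rewrite (coord_comp He.1); apply: big1 => l _.
have [Hpl|Hpl] := boolP (rho p l); last by rewrite Hf // mul0r.
have [Hlm|Hlm] := boolP (rho l m); last by rewrite Hh // mulr0.
by rewrite (rho_trans Hpl Hlm) in Hpm.
Qed.

End AdaptedEnd.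

Section ClassTwist.
Variable g : {set 'I_n} -> {set 'I_n}.
Hypothesis Hg : Aut0 rho g.

Lemma Aut0_classes i : g (cls rho i) \in classes rho.
Proof. by case: Hg => H _ _ _; apply/H/cls_classes. Qed.

Lemma Aut0_cle i j : cle rho (g (cls rho i)) (g (cls rho j)) = rho i j.
Proof. by case: Hg => _ _ H _; rewrite H ?cls_classes // cle_cls. Qed.

Lemma gtilde_index i : (index i (enum (cls rho i)) < size (enum (g (cls rho i))))%N.
Proof.
case: Hg => _ _ _ Hcard.
by rewrite -cardE Hcard ?cls_classes // cardE index_mem mem_enum mem_cls.
Qed.

Lemma gtilde_mem i : gtilde rho g i \in g (cls rho i).
Proof. by rewrite /gtilde -mem_enum mem_nth // gtilde_index. Qed.

Lemma cls_gtilde i : cls rho (gtilde rho g i) = g (cls rho i).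
Proof.
have [j Ej] := classesP (Aut0_classes i).
by have := gtilde_mem i; rewrite Ej => /mem_cls_eq.
Qed.

Lemma gtilde_inj : injective (gtilde rho g).
Proof.
move=> i j E.
have Ec : cls rho i = cls rho j.
  by case: Hg => _ Hinj _ _; apply: Hinj; rewrite ?cls_classes // -!cls_gtilde E.
have Hj := gtilde_index j; have Hi := gtilde_index i; rewrite Ec in Hi.
move: E; rewrite /gtilde Ec (set_nth_default i j Hj).
move/eqP; rewrite nth_uniq ?enum_uniq // => /eqP E.
have Hj' : j \in enum (cls rho j) by rewrite mem_enum mem_cls.
have Hi' : i \in enum (cls rho j) by rewrite mem_enum -Ec mem_cls.
by rewrite -(nth_index i Hi') E (nth_index i Hj').
Qed.

End ClassTwist.

End PreorderClasses.

Lemma inMrhoP (k : fieldType) n (rho : rel 'I_n) (A : 'M[k]_n) :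
  reflect (forall i j, A i j != 0 -> rho i j) (inMrho rho A).
Proof.
apply: (iffP forallP) => [H i j | H i].
  by apply: contraR => Hn; apply: (implyP (forallP (H i) j) Hn).
by apply/forallP => j; apply/implyP => Hn; apply: contraR Hn => /H.
Qed.

Lemma Tfam_refl (k : fieldType) n (rho : rel 'I_n) (a : 'I_n -> 'I_n -> k) :
  preorder_rel rho -> Tfam rho a -> forall i, a i i = 1.
Proof.
move=> Hrho [a_neq0 a_mul] i; apply: (mulIf (a_neq0 i i (rho_refl Hrho i))).
by rewrite mul1r a_mul ?rho_refl.
Qed.

Section FmapIso.
Variables (k : fieldType) (n : nat) (rho : rel 'I_n) (V V' : vectType k).
Variables (Vs : {set 'I_n} -> {vspace V}) (Vs' : {set 'I_n} -> {vspace V'}).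
Variables (v : n.-tuple V) (v' : n.-tuple V').
Hypothesis Hrho : preorder_rel rho.
Hypothesis Hv : adapted_basis rho Vs v.
Hypothesis Hv' : adapted_basis rho Vs' v'.
Variables (A : 'M[k]_n) (g : {set 'I_n} -> {set 'I_n}) (a : 'I_n -> 'I_n -> k).
Hypothesis HA : unitMrho rho A.
Hypothesis Hg : Aut0 rho g.

Local Notation w := (mxbasis v' (mx_twist rho g A)).
Local Notation F := (Fmap rho v v' A g a).

Lemma twist_mulmxV : mx_twist rho g A *m \matrix_(j, t) invmx A (gtilde rho g j) t = 1%:M.
Proof.
case: HA => _ HAu _; apply/matrixP => i t; rewrite !mxE.
under eq_bigr => j _ do rewrite !mxE.
rewrite -(reindex_inj (gtilde_inj Hrho Hg) (P := xpredT)
                      (F := fun s => A i s * invmx A s t)).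
by have /matrixP/(_ i t) := mulmxV HAu; rewrite !mxE.
Qed.

Lemma tnth_twist_basis j : tnth w j = \sum_i A i (gtilde rho g j) *: tnth v' i.
Proof. by rewrite tnth_mktuple; apply: eq_bigr => i _; rewrite mxE. Qed.

Lemma tnth_in_twist_basis t :
  tnth v' t = \sum_j invmx A (gtilde rho g j) t *: tnth w j.
Proof.
under eq_bigr => j _ do rewrite tnth_twist_basis scaler_sumr.
rewrite exchange_big /= -{1}(sum_delta_tnth v' t); apply: eq_bigr => i _.
under eq_bigr => j _ do rewrite scalerA.
rewrite -scaler_suml; congr (_ *: _).
have /matrixP/(_ i t) := twist_mulmxV; rewrite !mxE => <-.
by apply: eq_bigr => j _; rewrite !mxE mulrC.
Qed.

Lemma twist_basis : basis_of fullv w.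
Proof.
have [Hb _] := Hv'.
rewrite basisEdim size_tuple (size_basis Hb) leqnn andbT.
move/andP: Hb => [/eqP <- _]; apply/span_subvP => x /tnthP[t ->].
rewrite tnth_in_twist_basis; apply: memv_suml => j _; apply: memvZ.
exact/memv_span/mem_tnth.
Qed.

Lemma twist_basis_span b : b \in classes rho ->
  Vs' b = <<[seq tnth w t | t <- enum 'I_n & cle rho (g (cls rho t)) b]>>%VS.
Proof.
move=> Hb; case: HA => HA1 _ HA2.
rewrite (adapted_span Hv' Hb); apply/eqP; rewrite eqEsubv; apply/andP; split.
  apply/span_subvP => x /mapP[t]; rewrite mem_filter => /andP[Ht _] ->.
  rewrite tnth_in_twist_basis; apply: memv_suml => j _.
  have [->|Hn] := eqVneq (invmx A (gtilde rho g j) t) 0; first by rewrite scale0r mem0v.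
  apply: memvZ; apply: memv_span; apply: map_f; rewrite mem_filter mem_enum andbT.
  apply: (cle_trans Hrho (Aut0_classes Hg j) (cls_classes _ t) Hb) => //.
  by rewrite -(cls_gtilde Hrho Hg) cle_cls //; move/inMrhoP: HA2; apply.
apply/span_subvP => x /mapP[t]; rewrite mem_filter => /andP[Ht _] ->.
rewrite tnth_twist_basis; apply: memv_suml => i _.
have [->|Hn] := eqVneq (A i (gtilde rho g t)) 0; first by rewrite scale0r mem0v.
apply: memvZ; apply: memv_span; apply: map_f; rewrite mem_filter mem_enum andbT.
apply: (cle_trans Hrho (cls_classes _ i) (Aut0_classes Hg t) Hb) => //.
by rewrite -(cls_gtilde Hrho Hg) cle_cls //; move/inMrhoP: HA1; apply.
Qed.

Lemma twist_EndF f : (f \in EndF rho Vs') <-> inMrho_lfun rho w f.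
Proof.
apply: (EndF_inMrho Hrho twist_basis (h := fun t => g (cls rho t))).
- exact: Aut0_classes.
- exact: Aut0_cle.
- exact: twist_basis_span.
Qed.

Lemma FijE i j x : Fij rho v' A g a i j x = (a i j * coord w j x) *: tnth w i.
Proof.
rewrite /Fij linfunE_linear // => c y z.
by rewrite linearP /= mulrDr scalerDl mulrCA scalerA.
Qed.

Lemma coord_Fmap f p m :
  coord w p (F f (tnth w m)) = if rho p m then coord v p (f (tnth v m)) * a p m else 0.
Proof.
rewrite /Fmap sum_lfunE linear_sum.
under eq_bigr => i _ do rewrite sum_lfunE linear_sum.
under eq_bigr => i _ do under eq_bigr => j _ do
  rewrite scale_lfunE FijE !linearZ /= !(coord_tnth twist_basis).
rewrite (bigD1 p) //= [X in _ + X]big1 ?addr0; last first.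
  by move=> i /negPf Hip; rewrite big1 // => j _; rewrite Hip !mulr0.
under eq_bigr => j _ do rewrite eqxx mulr1.
case: ifP => Hpm.
  rewrite (bigD1 m) //= eqxx mulr1 big1 ?addr0 // => j /andP[_ /negPf].
  by rewrite eq_sym => ->; rewrite !mulr0.
rewrite big1 // => j Hj; case: eqP => [E|_]; last by rewrite !mulr0.
by move: Hj; rewrite -E Hpm.
Qed.

Lemma Fmap_Eij i j : rho i j -> F (Eij v i j) = Fij rho v' A g a i j.
Proof.
move=> Hij; apply: (lfun_coord_eq twist_basis) => p m.
rewrite coord_Fmap FijE linearZ /= (coord_Eij Hv.1) !(coord_tnth twist_basis).
have [->|Hpi] := eqVneq p i; last by rewrite /= !mulr0; case: ifP; rewrite ?mul0r.
have [->|Hmj] := eqVneq m j; first by rewrite Hij /= mul1r !mulr1.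
by rewrite /= !mulr0; case: ifP; rewrite ?mul0r.
Qed.

Lemma Fmap_linear c f h : F (c *: f + h) = c *: F f + F h.
Proof.
apply: (lfun_coord_eq twist_basis) => p m.
rewrite add_lfunE scale_lfunE linearD linearZ /= !coord_Fmap add_lfunE scale_lfunE.
rewrite linearD linearZ /=; case: ifP => _; last by rewrite mulr0 addr0.
by rewrite mulrDl mulrA.
Qed.

Hypothesis Ha : Tfam rho a.

Lemma Fmap_comp f h : f \in EndF rho Vs -> h \in EndF rho Vs ->
  F (f \o h)%VF = (F f \o F h)%VF.
Proof.
move=> /(adapted_EndF Hrho Hv) Hf /(adapted_EndF Hrho Hv) Hh.
apply: (lfun_coord_eq twist_basis) => p m.
rewrite (coord_comp twist_basis) coord_Fmap (coord_comp Hv.1).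
case: ifP => Hpm.
  rewrite big_distrl; apply: eq_bigr => l _ /=; rewrite !coord_Fmap.
  have [Hpl|Hpl] := boolP (rho p l); last by rewrite Hf // !mul0r.
  have [Hlm|Hlm] := boolP (rho l m); last by rewrite Hh // !mulr0 mul0r.
  by case: Ha => _ a_mul; rewrite -(a_mul p l m Hpl Hlm) mulrACA.
rewrite big1 // => l _; rewrite !coord_Fmap.
have [Hpl|Hpl] := boolP (rho p l); last by rewrite mul0r.
have [Hlm|Hlm] := boolP (rho l m); last by rewrite mulr0.
by rewrite (rho_trans Hrho Hpl Hlm) in Hpm.
Qed.

Lemma Fmap_id : F \1%VF = \1%VF.
Proof.
apply: (lfun_coord_eq twist_basis) => p m.
rewrite coord_Fmap !id_lfunE (coord_tnth Hv.1) (coord_tnth twist_basis).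
have [->|_] := eqVneq m p; first by rewrite rho_refl // (Tfam_refl Hrho Ha) mulr1.
by case: ifP; rewrite ?mul0r.
Qed.

Lemma Fmap_inj : {in EndF rho Vs &, injective F}.
Proof.
move=> f h /(adapted_EndF Hrho Hv) Hf /(adapted_EndF Hrho Hv) Hh Efh.
apply: (lfun_coord_eq Hv.1) => p m.
have [Hpm|Hpm] := boolP (rho p m); last by rewrite Hf ?Hh.
have := coord_Fmap f p m; rewrite Efh coord_Fmap Hpm => /esym.
by case: Ha => a_neq0 _; move/mulIf; apply; apply: a_neq0.
Qed.

Lemma Fmap_onto fp : fp \in EndF rho Vs' -> exists2 f, f \in EndF rho Vs & F f = fp.
Proof.
case: Ha => a_neq0 _; move=> /twist_EndF Hfp.
exists (\sum_i \sum_j (coord w i (fp (tnth w j)) / a i j) *: Eij v i j).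
  by apply/(adapted_EndF Hrho Hv) => p m Hpm; rewrite (coord_sum_Eij Hv.1) Hfp // mul0r.
apply: (lfun_coord_eq twist_basis) => p m; rewrite coord_Fmap (coord_sum_Eij Hv.1).
by case: ifP => Hpm; [rewrite mulfVK // a_neq0 | rewrite Hfp // Hpm].
Qed.

Lemma Fmap_alg_iso : alg_iso (EndF rho Vs) (EndF rho Vs') F.
Proof.
split=> [f _ | c f h _ _ | | |]; last split.
- by apply/twist_EndF => p m Hpm; rewrite coord_Fmap (negPf Hpm).
- exact: Fmap_linear.
- exact: Fmap_comp.
- exact: Fmap_id.
- exact: Fmap_inj.
- exact: Fmap_onto.
Qed.

End FmapIso.

Lemma exists_neq0_sumr (R : nmodType) (I : finType) (F : I -> R) :
  \sum_i F i != 0 -> exists i, F i != 0.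
Proof.
move=> H; apply/existsP; apply: contraR H => /existsPn H.
by apply/eqP/big1 => i _; apply/eqP; move: (H i); rewrite negbK.
Qed.

Section Surjectivity.
Variables (k : fieldType) (n : nat) (rho : rel 'I_n) (V V' : vectType k).
Variables (Vs : {set 'I_n} -> {vspace V}) (Vs' : {set 'I_n} -> {vspace V'}).
Variables (v : n.-tuple V) (v' : n.-tuple V').
Hypothesis Hrho : preorder_rel rho.
Hypothesis Hv : adapted_basis rho Vs v.
Hypothesis Hv' : adapted_basis rho Vs' v'.
Variable phi : 'End(V) -> 'End(V').
Hypothesis Hphi : alg_iso (EndF rho Vs) (EndF rho Vs') phi.

Local Notation EF := (EndF rho Vs).
Local Notation EF' := (EndF rho Vs').

Let Eij_EF := Eij_EndF Hrho Hv.
Let Eii_EF i : Eij v i i \in EF := Eij_EF (rho_refl Hrho i).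

Lemma phi_EndF f : f \in EF -> phi f \in EF'.
Proof. by case: Hphi => H _ _ _ _; apply: H. Qed.

Lemma phi_linear c f h : f \in EF -> h \in EF -> phi (c *: f + h) = c *: phi f + phi h.
Proof. by case: Hphi => _ H _ _ _; apply: H. Qed.

Lemma phi_comp f h : f \in EF -> h \in EF -> phi (f \o h)%VF = (phi f \o phi h)%VF.
Proof. by case: Hphi => _ _ H _ _; apply: H. Qed.

Lemma phi_inj : {in EF &, injective phi}.
Proof. by case: Hphi => _ _ _ _ []. Qed.

Lemma phi_surj fp : fp \in EF' -> exists2 f, f \in EF & phi f = fp.
Proof. by case: Hphi => _ _ _ _ [_]; apply. Qed.

Lemma phi0 : phi 0 = 0.
Proof.
have := phi_linear 1 (EndF0 Hrho Hv) (EndF0 Hrho Hv); rewrite !scale1r !addr0.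
by move/(congr1 (fun x => x - phi 0)); rewrite addrK subrr => /esym.
Qed.

Lemma phiZ c f : f \in EF -> phi (c *: f) = c *: phi f.
Proof. by move=> Hf; have := phi_linear c Hf (EndF0 Hrho Hv); rewrite !addr0 phi0 addr0. Qed.

Lemma phi_neq0 f : f \in EF -> f != 0 -> phi f != 0.
Proof.
move=> Hf; apply: contra_neq => E.
by apply: phi_inj Hf (EndF0 Hrho Hv) _; rewrite E phi0.
Qed.

(* The [phi (E_ii)] are nonzero orthogonal idempotents, so nonzero vectors picked in their
   images are linearly independent. *)
Let idem i := phi (Eij v i i).

Lemma idem_comp i j : (idem i \o idem j)%VF = if i == j then idem i else 0.
Proof.
rewrite /idem -phi_comp ?Eii_EF // (Eij_comp Hv.1).
by have [->|_] := eqVneq i j; rewrite ?scale1r // scale0r phi0.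
Qed.

Let idem_vec j := idem j (tnth v' (odflt j [pick t | idem j (tnth v' t) != 0])).

Lemma idem_vec_neq0 j : idem_vec j != 0.
Proof.
rewrite /idem_vec; case: pickP => [t //|H] /=.
have := phi_neq0 (Eii_EF j) (Eij_neq0 Hv.1 j j); apply: contraR => _; apply/eqP.
apply: (lfun_basis_eq Hv'.1) => t; rewrite zero_lfunE; apply/eqP.
by have := H t; rewrite /= => /negbFE.
Qed.

Lemma idem_idem_vec i j : idem i (idem_vec j) = if i == j then idem_vec j else 0.
Proof.
by rewrite /idem_vec -comp_lfunE idem_comp; have [->|_] := eqVneq i j; rewrite ?zero_lfunE.
Qed.

Let ubasis : n.-tuple V' := [tuple idem_vec j | j < n].

Lemma ubasis_basis : basis_of fullv ubasis.
Proof.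
rewrite basisEfree subvf size_tuple (size_basis Hv'.1) leqnn !andbT.
apply/freeP => c Hc j; have := congr1 (idem j) Hc; rewrite linear0 linear_sum.
rewrite (bigD1 j) //= big1 ?addr0 => [|i /negPf Hi]; last first.
  by rewrite linearZ /= (nth_map i) ?size_enum_ord // nth_ord_enum idem_idem_vec eq_sym Hi scaler0.
rewrite linearZ /= (nth_map j) ?size_enum_ord // nth_ord_enum idem_idem_vec eqxx => /eqP.
by rewrite scaler_eq0 (negPf (idem_vec_neq0 j)) orbF => /eqP.
Qed.

Lemma idem_Eij i : idem i = Eij ubasis i i.
Proof.
apply: (lfun_basis_eq ubasis_basis) => j.
rewrite EijE (coord_tnth ubasis_basis) !tnth_mktuple idem_idem_vec eq_sym.
by have [->|_] := eqVneq i j; rewrite ?scale1r ?scale0r.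
Qed.

Definition phi_coef p m := coord ubasis p (phi (Eij v p m) (tnth ubasis m)).

Lemma phi_Eij p m : rho p m -> phi (Eij v p m) = phi_coef p m *: Eij ubasis p m.
Proof.
move=> Hpm; have -> : Eij v p m = (Eij v p p \o Eij v p m \o Eij v m m)%VF.
  by rewrite (Eij_comp Hv.1) eqxx scale1r (Eij_comp Hv.1) eqxx scale1r.
rewrite !phi_comp ?(EndF_comp Hrho Hv) ?Eii_EF ?Eij_EF //.
apply: (lfun_basis_eq ubasis_basis) => t.
by rewrite !comp_lfunE -!/(idem _) !idem_Eij scale_lfunE !EijE !linearZ /= scalerA.
Qed.

Lemma coord_phi f p m : f \in EF ->
  coord ubasis p (phi f (tnth ubasis m)) =
  if rho p m then coord v p (f (tnth v m)) * phi_coef p m else 0.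
Proof.
move=> Hf.
have -> : coord ubasis p (phi f (tnth ubasis m)) =
          coord ubasis p ((idem p \o phi f \o idem m)%VF (tnth ubasis m)).
  rewrite !comp_lfunE !idem_Eij !EijE (coord_tnth ubasis_basis) eqxx scale1r.
  by rewrite linearZ /= (coord_tnth ubasis_basis) eqxx mulr1.
rewrite /idem -!phi_comp ?(EndF_comp Hrho Hv) ?Eii_EF // (Eij_sandwich Hv.1).
case: ifP => Hpm; first by rewrite phiZ ?Eij_EF // scale_lfunE linearZ.
by rewrite (proj1 (adapted_EndF Hrho Hv f) Hf p m (negbT Hpm)) scale0r phi0 zero_lfunE linear0.
Qed.

Lemma phi_coef_neq0 p m : rho p m -> phi_coef p m != 0.
Proof.
move=> Hpm; have := phi_neq0 (Eij_EF Hpm) (Eij_neq0 Hv.1 p m).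
by rewrite phi_Eij //; apply: contra_neq => ->; rewrite scale0r.
Qed.

Lemma phi_coef_Tfam : Tfam rho phi_coef.
Proof.
split=> [|i j r Hij Hjr]; first exact: phi_coef_neq0.
rewrite [phi_coef i r]/phi_coef.
have -> : Eij v i r = (Eij v i j \o Eij v j r)%VF by rewrite (Eij_comp Hv.1) eqxx scale1r.
rewrite phi_comp ?Eij_EF // comp_lfunE !phi_Eij // !scale_lfunE !EijE.
rewrite (coord_tnth ubasis_basis) eqxx scale1r !linearZ /=.
by rewrite !(coord_tnth ubasis_basis) !eqxx !mulr1.
Qed.

Lemma ubasis_EndF f : f \in EF' -> inMrho_lfun rho ubasis f.
Proof. by move=> /phi_surj[f0 Hf0 <-] p m Hpm; rewrite coord_phi // (negPf Hpm). Qed.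

Lemma Eij_ubasis_EndF p m : rho p m -> Eij ubasis p m \in EF'.
Proof.
move=> Hpm; have -> : Eij ubasis p m = phi ((phi_coef p m)^-1 *: Eij v p m).
  by rewrite phiZ ?Eij_EF // phi_Eij // scalerA mulVf ?scale1r // phi_coef_neq0.
exact/phi_EndF/(EndFZ Hrho Hv)/Eij_EF.
Qed.

Definition uv_coord t j := coord v' t (tnth ubasis j).
Definition vu_coord j t := coord ubasis j (tnth v' t).

(* [E^u_ij] lies in [End(F')], so in the basis [v'] it is supported on [rho]. *)
Lemma uv_support i j s t :
  rho i j -> vu_coord j t != 0 -> uv_coord s i != 0 -> rho s t.
Proof.
move=> Hij Hq Hp; apply: contraR (mulf_neq0 Hq Hp) => Hst; apply/eqP.
by have := proj1 (adapted_EndF Hrho Hv' _) (Eij_ubasis_EndF Hij) s t Hst; rewrite EijE linearZ.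
Qed.

Lemma vu_support i j s t :
  rho s t -> uv_coord t j != 0 -> vu_coord i s != 0 -> rho i j.
Proof.
move=> Hst Hp Hq; apply: contraR (mulf_neq0 Hp Hq) => Hij; apply/eqP.
by have := ubasis_EndF (Eij_EndF Hrho Hv' Hst) Hij; rewrite EijE linearZ.
Qed.

Definition pivot j := odflt j [pick t | (uv_coord t j != 0) && (vu_coord j t != 0)].

Lemma pivot_spec j : (uv_coord (pivot j) j != 0) && (vu_coord j (pivot j) != 0).
Proof.
rewrite /pivot; case: pickP => [t //|H] /=.
have [t] : exists t, uv_coord t j * vu_coord j t != 0.
  apply: exists_neq0_sumr; suff -> : \sum_t uv_coord t j * vu_coord j t = 1 by apply: oner_neq0.
  have := coord_tnth ubasis_basis j j; rewrite eqxx mulr1n => <-.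
  rewrite [in RHS](basis_expansion Hv'.1 (tnth ubasis j)) linear_sum.
  by apply: eq_bigr => t _; rewrite linearZ.
by move: (H t); rewrite /= mulf_eq0 negb_or => ->.
Qed.

Lemma rho_uv_pivot s j : uv_coord s j != 0 -> rho s (pivot j).
Proof. by case/andP: (pivot_spec j) => _; apply: uv_support (rho_refl Hrho j). Qed.

Lemma rho_pivot_vu j t : vu_coord j t != 0 -> rho (pivot j) t.
Proof. by case/andP: (pivot_spec j) => Hp _ Hq; apply: uv_support (rho_refl Hrho j) Hq Hp. Qed.

Lemma rho_pivot i j : rho (pivot i) (pivot j) = rho i j.
Proof.
case/andP: (pivot_spec i) => Hpi Hqi; case/andP: (pivot_spec j) => Hpj Hqj.
by apply/idP/idP => H; [apply: vu_support H Hpj Hqi | apply: uv_support H Hqj Hpi].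
Qed.

Definition pivot_class (a : {set 'I_n}) : {set 'I_n} :=
  if [pick i in a] is Some i then cls rho (pivot i) else a.

Lemma pivot_class_cls j : pivot_class (cls rho j) = cls rho (pivot j).
Proof.
rewrite /pivot_class; case: pickP => [i | /(_ j)]; last by rewrite (mem_cls Hrho).
by rewrite inE => /andP[H1 H2]; apply/(cls_eqP Hrho); rewrite !rho_pivot H1 H2.
Qed.

Lemma pivot_class_classes a : a \in classes rho -> pivot_class a \in classes rho.
Proof. by move=> /classesP[j ->]; rewrite pivot_class_cls cls_classes. Qed.

Lemma pivot_class_inj : {in classes rho &, injective pivot_class}.
Proof.
move=> a b /classesP[i ->] /classesP[j ->]; rewrite !pivot_class_cls.
by move/(cls_eqP Hrho); rewrite !rho_pivot => /(cls_eqP Hrho).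
Qed.

Lemma pivot_class_cle :
  {in classes rho &, forall a b, cle rho (pivot_class a) (pivot_class b) = cle rho a b}.
Proof.
by move=> a b /classesP[i ->] /classesP[j ->]; rewrite !pivot_class_cls !cle_cls // rho_pivot.
Qed.

Lemma exists_perm_uv_coord : exists s : 'S_n, forall i, uv_coord i (s i) != 0.
Proof.
have uv_vu : \matrix_(t, j) uv_coord t j *m \matrix_(j, t) vu_coord j t = 1%:M.
  apply/matrixP => t s; rewrite !mxE.
  have := coord_tnth Hv'.1 t s; rewrite eq_sym => <-.
  rewrite [in RHS](basis_expansion ubasis_basis (tnth v' s)) linear_sum.
  by apply: eq_bigr => j _; rewrite !mxE linearZ /= mulrC.
have [+ _] := mulmx1_unit uv_vu; rewrite unitmxE unitfE => /exists_neq0_sumr[s].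
rewrite mulf_eq0 negb_or => /andP[_ /prodf_neq0 Hs].
by exists s => i; have := Hs i isT; rewrite mxE.
Qed.

(* Each [t] lies below [pivot (s t)], and summing [down_card] over all [t] gives equal
   totals because [pivot_class] permutes the classes; so no inequality is strict. *)
Lemma cls_pivot_perm (s : 'S_n) :
  (forall i, uv_coord i (s i) != 0) -> forall t, cls rho t = cls rho (pivot (s t)).
Proof.
move=> Hs.
have Hle t : (down_card rho (cls rho t) <= down_card rho (cls rho (pivot (s t))))%N.
  by apply: down_card_le; rewrite ?cls_classes // cle_cls //; apply: rho_uv_pivot.
have Hsum : (\sum_t down_card rho (cls rho t) =
             \sum_t down_card rho (cls rho (pivot (s t))))%N.
  rewrite (reindex_inj (@perm_inj _ s)) /=; apply: eq_bigr => t _.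
  rewrite -pivot_class_cls down_card_morph ?cls_classes //.
  - exact: pivot_class_classes.
  - exact: pivot_class_inj.
  - exact: pivot_class_cle.
have [_] := leqif_sum (fun t (_ : true) => leqif_eq (Hle t)).
rewrite Hsum eqxx => /esym/forall_inP Heq t.
apply/eqP; apply: contraT => Hne.
suff : (down_card rho (cls rho t) < down_card rho (cls rho (pivot (s t))))%N.
  by rewrite ltn_neqAle (Heq t isT).
by rewrite down_card_lt ?cls_classes // cle_cls //; apply/rho_uv_pivot/Hs.
Qed.

Lemma pivot_class_card a : a \in classes rho -> #|pivot_class a| = #|a|.
Proof.
have [s /cls_pivot_perm Es] := exists_perm_uv_coord.
move=> /classesP[j ->]; rewrite pivot_class_cls.
have -> : cls rho (pivot j) = s @^-1: cls rho j.
  apply/setP => t; rewrite !inE -[rho j _]rho_pivot -[rho _ j]rho_pivot.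
  by apply/(cls_eqP Hrho)/(cls_eqP Hrho); rewrite -Es.
by rewrite card_preimset //; apply: perm_inj.
Qed.

Lemma pivot_class_Aut0 : Aut0 rho pivot_class.
Proof.
split.
- exact: pivot_class_classes.
- exact: pivot_class_inj.
- exact: pivot_class_cle.
- exact: pivot_class_card.
Qed.

Let gperm : {perm 'I_n} := perm (gtilde_inj Hrho pivot_class_Aut0).
Let gpermE : gperm =1 gtilde rho pivot_class := permE _.

(* Columns are reindexed by [gtilde^-1] so that twisting by [pivot_class] gives back the
   matrix of [ubasis] in [v']. *)
Definition change_mx : 'M[k]_n := \matrix_(i, s) uv_coord i (gperm^-1 s)%g.

Lemma change_mx_mulV : change_mx *m \matrix_(s, t) vu_coord (gperm^-1 s)%g t = 1%:M.
Proof.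
apply/matrixP => i t; rewrite !mxE (reindex_inj (@perm_inj _ gperm)) /=.
under eq_bigr => j _ do rewrite !mxE permK.
have := coord_tnth Hv'.1 i t; rewrite eq_sym => <-.
rewrite [in RHS](basis_expansion ubasis_basis (tnth v' t)) linear_sum.
by apply: eq_bigr => j _; rewrite linearZ /= mulrC.
Qed.

Lemma rho_pivot_gperm j : rho (pivot j) (gperm j) && rho (gperm j) (pivot j).
Proof.
by have := gtilde_mem Hrho pivot_class_Aut0 j; rewrite pivot_class_cls inE gpermE.
Qed.

Lemma change_mx_unit : unitMrho rho change_mx.
Proof.
have [Hu _] := mulmx1_unit change_mx_mulV.
have inv_change_mx : invmx change_mx = \matrix_(s, t) vu_coord (gperm^-1 s)%g t.
  by rewrite -[RHS](mulKmx Hu) change_mx_mulV mulmx1.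
split=> //; rewrite ?inv_change_mx; apply/inMrhoP => i s; rewrite mxE.
  move=> /rho_uv_pivot Hi; have /andP[H _] := rho_pivot_gperm (gperm^-1 s)%g.
  by rewrite permKV in H; apply: rho_trans Hi H.
move=> /rho_pivot_vu Hs; have /andP[_ H] := rho_pivot_gperm (gperm^-1 i)%g.
by rewrite permKV in H; apply: rho_trans H Hs.
Qed.

Lemma mxbasis_twist_change_mx : mxbasis v' (mx_twist rho pivot_class change_mx) = ubasis.
Proof.
apply: eq_from_tnth => j; rewrite tnth_mktuple.
rewrite [in RHS](basis_expansion Hv'.1 (tnth ubasis j)); apply: eq_bigr => i _.
by rewrite !mxE -gpermE permK.
Qed.

Lemma phi_Fmap :
  {in EF, forall f, phi f = Fmap rho v v' change_mx pivot_class phi_coef f}.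
Proof.
move=> f Hf; apply: (lfun_coord_eq ubasis_basis) => p m.
rewrite coord_phi // -mxbasis_twist_change_mx.
by rewrite (coord_Fmap v Hrho Hv' phi_coef change_mx_unit pivot_class_Aut0).
Qed.

End Surjectivity.

Unset Implicit Arguments. Set Strict Implicit.

Theorem proposition4p2 (k : fieldType) (n : nat) (rho : rel 'I_n)
    (V V' : vectType k)
    (Vs : {set 'I_n} -> {vspace V}) (Vs' : {set 'I_n} -> {vspace V'})
    (v : n.-tuple V) (v' : n.-tuple V') :
  (0 < n)%N ->
  preorder_rel rho ->
  adapted_basis rho Vs v ->
  adapted_basis rho Vs' v' ->
  (forall (A : 'M[k]_n) (g : {set 'I_n} -> {set 'I_n}) (a : 'I_n -> 'I_n -> k),
      unitMrho rho A -> Aut0 rho g -> Tfam rho a ->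
      (forall i j, rho i j -> Fmap rho v v' A g a (Eij v i j) = Fij rho v' A g a i j)
      /\ alg_iso (EndF rho Vs) (EndF rho Vs') (Fmap rho v v' A g a))
  /\
  (forall phi : 'End(V) -> 'End(V'),
      alg_iso (EndF rho Vs) (EndF rho Vs') phi ->
      exists A : 'M[k]_n, exists g : {set 'I_n} -> {set 'I_n},
      exists a : 'I_n -> 'I_n -> k,
        [/\ unitMrho rho A, Aut0 rho g, Tfam rho a
          & {in EndF rho Vs, forall f, phi f = Fmap rho v v' A g a f}]).
Proof.
move=> _ Hrho Hv Hv'; split=> [A g a HA Hg Ha | phi Hphi].
  split; [exact (Fmap_Eij Hrho Hv Hv' a HA Hg) | exact (Fmap_alg_iso Hrho Hv Hv' HA Hg Ha)].
do 3 eexists; split; last exact (phi_Fmap Hrho Hv Hv' Hphi).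
- exact (change_mx_unit Hrho Hv Hv' Hphi).
- exact (pivot_class_Aut0 Hrho Hv Hv' Hphi).
- exact (phi_coef_Tfam Hrho Hv Hv' Hphi).
Qed.
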